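(* Let $q$ be a prime power, $j\ge2$ an integer, $h_{\boldsymbol a}(X)=X^j+a_{j-1}X^{j-1}+\cdots+a_1X+a_0\in\mathbb{F}_q[X]$, and let $L_j=L_j(h_{\boldsymbol a})$ be its companion matrix. Then $\mathrm{rank}(L_j-L_j^T)\ge j-2$. Moreover, if $j$ is odd then $\mathrm{rank}(L_j-L_j^T)=j-1$; if $j$ is even then $\mathrm{rank}(L_j-L_j^T)=j$ if and only if $1+a_0+a_2+a_4+\cdots+a_{j-2}\neq0$.
   Context: The companion matrix $L_j(h_{\boldsymbol a})$ is the $j\times j$ matrix over $\mathbb{F}_q$ whose $i$-th row, for $1\le i\le j-1$, has a $1$ in column $i+1$ and zeros elsewhere, and whose last row is $(-a_0,-a_1,\dots,-a_{j-1})$. *)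

From mathcomp Require Import all_boot all_order all_algebra.
Set Implicit Arguments. Unset Strict Implicit. Unset Printing Implicit Defensive.
Import GRing.Theory.
Local Open Scope ring_scope.

(* Companion matrix L_j(h_a) of h_a(X) = X^j + a_{j-1} X^{j-1} + ... + a_0,
   with coefficients a : 'I_j -> R (a k = a_k).  0-indexed: row i < j-1 has
   a 1 in column i+1, last row is (-a_0, ..., -a_{j-1}). *)
Definition companion (R : nzRingType) (j : nat) (a : 'I_j -> R) : 'M[R]_j :=
  \matrix_(i < j, k < j)
    if (i.+1 < j)%N then ((k : nat) == i.+1)%:R else - a k.

(* Let M := L - L^T.  For k < j - 1 the k-th entry of v M = 0 reads
   v_{k+1} = v_{k-1} - v_{j-1} a_k (with v_{-1} = 0), so a vector of the left
   kernel is determined by v_0 and v_{j-1}, and rank M >= j - 2.  When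
   v_{j-1} = 0 the recurrence gives v = (v_0, 0, v_0, 0, ...); for odd j its
   last entry forces v_0 = 0, while v_{j-1} = 1 yields a nonzero kernel vector
   because M is alternating: v M v^T = 0 turns the vanishing of the first j - 1
   entries of v M into that of the last one.  For even j, both the recurrence
   at index j - 1 and the last equation produce the factor
   1 + a_0 + a_2 + ... + a_{j-2}. *)
From mathcomp Require Import all_boot all_order all_algebra.
From mathcomp Require Import zify ring.
Set Implicit Arguments. Unset Strict Implicit. Unset Printing Implicit Defensive.
Import GRing.Theory.
Local Open Scope ring_scope.

Section KernelRank.
Variable F : fieldType.

Lemma mxrank_ge_kernel_coords m d (M : 'M[F]_m) (s : 'I_d -> 'I_m) :
  (forall u : 'rV_m, u *m M = 0 -> (forall c, u 0 (s c) = 0) -> u = 0) ->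
  (m - d <= \rank M)%N.
Proof.
move=> ker_coords; pose K := kermx M; pose P := colsub s (1%:M : 'M[F]_m).
have KP0 : (K :&: kermx P)%MS = 0.
  apply/row_matrixP => r; rewrite row0; apply: ker_coords.
    by apply/sub_kermxP; apply: submx_trans (row_sub r _) (capmxSl _ _).
  move=> c; have /sub_kermxP : (row r (K :&: kermx P) <= kermx P)%MS.
    exact: submx_trans (row_sub r _) (capmxSr _ _).
  by rewrite mulmx_colsub mulmx1 => /rowP/(_ c); rewrite !mxE.
have := mxrank_mul_ker K P; rewrite KP0 mxrank0 addn0 mxrank_ker.
have := rank_leq_col (K *m P); have := rank_leq_row M; lia.
Qed.

Lemma mxrank_lt_of_kernel m (M : 'M[F]_m) (u : 'rV_m) :
  u != 0 -> u *m M = 0 -> (\rank M < m)%N.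
Proof.
move=> u_neq0 uM0; rewrite ltn_neqAle rank_leq_row andbT.
apply: contra u_neq0 => M_free.
by rewrite -(mulmx_free_eq0 _ M_free) uM0.
Qed.

End KernelRank.

Lemma alternating_last_row (R : comNzRingType) m (L : 'M[R]_m.+1) (v : 'rV_m.+1) :
  (forall k : 'I_m.+1, (k < m)%N -> (v *m (L - L^T)) 0 k = 0) ->
  (v *m (L - L^T)) 0 ord_max * v 0 ord_max = 0.
Proof.
move=> rows0.
have vMv : v *m (L - L^T) *m v^T = 0.
  have tr1 (N : 'M[R]_1) : N^T = N by apply/matrixP => i j; rewrite !ord1 mxE.
  by rewrite mulmxBr mulmxBl -[X in _ - X]tr1 !trmx_mul !trmxK mulmxA subrr.
move/matrixP/(_ 0 0): vMv; rewrite [RHS]mxE [LHS]mxE (bigD1 ord_max) //=.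
rewrite big1 ?addr0 ?mxE // => k k_ne_max; rewrite rows0 ?mul0r //.
by move: k_ne_max (ltn_ord k); rewrite -val_eqE /=; lia.
Qed.

Lemma eq_row_last (T : Type) m (u v : 'rV[T]_m.+1) :
  (forall k : 'I_m.+1, (k < m)%N -> u 0 k = v 0 k) ->
  u 0 ord_max = v 0 ord_max -> u = v.
Proof.
move=> eq_low eq_max; apply/rowP => k; have [/eq_low // | ge_k] := ltnP k m.
by have -> : k = ord_max by apply: val_inj => /=; have := ltn_ord k; lia.
Qed.

Lemma sum_mul_nat_eq (R : pzSemiRingType) (p y : nat) (g : nat -> R) :
  \sum_(i < p) g i * ((i : nat) == y)%:R = if (y < p)%N then g y else 0.
Proof.
by under eq_bigr do rewrite mulr_natr mulrb; rewrite -big_mkcond big_ord1_eq.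
Qed.

Definition extn (V : nmodType) m (f : 'I_m -> V) (x : nat) : V := oapp f 0 (insub x).

Lemma extn_ord (V : nmodType) m (f : 'I_m -> V) (i : 'I_m) : extn f i = f i.
Proof. by rewrite /extn valK. Qed.

Lemma extn_ord0 (V : nmodType) m (f : 'I_m.+1 -> V) : extn f 0 = f ord0.
Proof. exact: (extn_ord f ord0). Qed.

Lemma extn_ord_max (V : nmodType) m (f : 'I_m.+1 -> V) : extn f m = f ord_max.
Proof. exact: (extn_ord f ord_max). Qed.

Lemma extn_row (V : nmodType) m (f : nat -> V) x :
  (x < m)%N -> extn ((\row_(i < m) f i) 0) x = f x.
Proof. by move=> lt_x_m; rewrite -[x]/(val (Ordinal lt_x_m)) extn_ord mxE. Qed.

Section SkewCompanion.
Variables (R : comNzRingType) (n : nat) (a : 'I_n.+2 -> R).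
Local Notation M := (companion a - (companion a)^T).
Local Notation A := (extn a).

Lemma mul_companion (v : 'rV[R]_n.+2) (k : 'I_n.+2) :
  (v *m companion a) 0 k =
  (if k : nat is k'.+1 then extn (v 0) k' else 0) - v 0 ord_max * a k.
Proof.
rewrite !mxE big_ord_recr /= !mxE ltnn /= mulrN; congr (_ - _).
under eq_bigr => i _ do rewrite !mxE /= ltnS ltn_ord -(extn_ord (v 0)) /=.
case: k => [[|k] lt_k] /=.
  by rewrite big1 // => i _; rewrite mulr0.
by under eq_bigr => i _ do rewrite eqSS eq_sym; rewrite sum_mul_nat_eq -ltnS lt_k.
Qed.

Lemma mul_companion_tr (v : 'rV[R]_n.+2) (k : 'I_n.+2) :
  (v *m (companion a)^T) 0 k =
  if (k < n.+1)%N then extn (v 0) k.+1 else - \sum_i v 0 i * a i.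
Proof.
rewrite mxE; case: ifP => lt_k_n.
  under eq_bigr => i _ do rewrite !mxE ltnS lt_k_n -(extn_ord (v 0)).
  by rewrite (@sum_mul_nat_eq _ _ _ (extn (v 0))) ltnS lt_k_n.
under eq_bigr => i _ do rewrite !mxE ltnS lt_k_n mulrN.
by rewrite sumrN.
Qed.

Definition kernel_step (f : nat -> R) (t : R) (k : nat) : R :=
  (if k is k'.+1 then f k' else 0) - t * A k.

Lemma mul_skew_companion (v : 'rV[R]_n.+2) (k : 'I_n.+2) : (k < n.+1)%N ->
  (v *m M) 0 k = kernel_step (extn (v 0)) (extn (v 0) n.+1) k - extn (v 0) k.+1.
Proof.
move=> lt_k_n; rewrite mulmxBr [LHS]mxE [X in _ + X]mxE.
rewrite mul_companion mul_companion_tr lt_k_n.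
by rewrite /kernel_step -(extn_ord (v 0) ord_max) -(extn_ord a k).
Qed.

Lemma mul_skew_companion_last (v : 'rV[R]_n.+2) :
  (v *m M) 0 ord_max = extn (v 0) n + \sum_(i < n.+1) extn (v 0) i * A i.
Proof.
rewrite mulmxBr [LHS]mxE [X in _ + X]mxE mul_companion mul_companion_tr ltnn /=.
rewrite opprK big_ord_recr /=.
under eq_bigr => i _ do rewrite -(extn_ord (v 0)) -(extn_ord a) /=.
ring.
Qed.

Definition kernel_seq (t x0 : R) (k : nat) : R :=
  if odd k then - (t * \sum_(i < k | ~~ odd i) A i)
  else x0 - t * \sum_(i < k | odd i) A i.

Lemma kernel_seq0 t x0 : kernel_seq t x0 0 = x0.
Proof. by rewrite /kernel_seq /= big_ord0 mulr0 subr0. Qed.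

Lemma kernel_seqS t x0 k :
  kernel_seq t x0 k.+1 = kernel_step (kernel_seq t x0) t k.
Proof.
rewrite /kernel_seq /kernel_step; case: k => [|k] /=.
  by rewrite big_ord1_cond /= sub0r.
rewrite negbK; case odd_k: (odd k);
  by rewrite [in LHS]big_mkcond [in RHS]big_mkcond !big_ord_recr /= odd_k /=; ring.
Qed.

Lemma kernel_seq_t0 x0 k : kernel_seq 0 x0 k = if odd k then 0 else x0.
Proof. by rewrite /kernel_seq !mul0r oppr0 addr0. Qed.

Lemma skew_companion_rowsE (v : 'rV[R]_n.+2) :
  (forall k : 'I_n.+2, (k < n.+1)%N -> (v *m M) 0 k = 0) <->
  (forall x, (x < n.+2)%N ->
     extn (v 0) x = kernel_seq (extn (v 0) n.+1) (extn (v 0) 0) x).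
Proof.
set t := extn (v 0) n.+1; set ks := kernel_seq t (extn (v 0) 0).
split=> [rows0 | v_ks k lt_k_n].
  have step k : (k < n.+1)%N -> extn (v 0) k.+1 = kernel_step (extn (v 0)) t k.
    move=> lt_k_n; have k_val : (inord k : 'I_n.+2) = k :> nat.
      by rewrite inordK // ltnW.
    have := rows0 (inord k); rewrite k_val => /(_ lt_k_n).
    by rewrite mul_skew_companion k_val // => /eqP; rewrite subr_eq0 => /eqP.
  suff ks_pair x : (x < n.+1)%N -> extn (v 0) x = ks x /\ extn (v 0) x.+1 = ks x.+1.
    by case=> [|x] lt_x; [case: (ks_pair 0%N) | case: (ks_pair x)].
  elim: x => [|x IH] lt_x; first by rewrite /ks kernel_seq0 kernel_seqS step.
  have [IHx IHx1] := IH (ltnW lt_x); split=> //.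
  by rewrite /ks kernel_seqS step // /kernel_step /= IHx.
rewrite mul_skew_companion // -/t (v_ks k.+1) // /ks kernel_seqS /kernel_step.
case: k lt_k_n => [[|k] lt_k] /= lt_k_n; first by rewrite subrr.
by rewrite v_ks ?subrr //; lia.
Qed.

Lemma skew_companion_kernel_seq (u : 'rV[R]_n.+2) : u *m M = 0 ->
  forall x, (x < n.+2)%N ->
    extn (u 0) x = kernel_seq (extn (u 0) n.+1) (extn (u 0) 0) x.
Proof. by move=> uM0; apply/skew_companion_rowsE => k _; rewrite uM0 mxE. Qed.

Lemma row_kernel_seq_rows0 t x0 : kernel_seq t x0 n.+1 = t ->
  forall k : 'I_n.+2, (k < n.+1)%N -> ((\row_i kernel_seq t x0 i) *m M) 0 k = 0.
Proof.
move=> ks_last; apply/skew_companion_rowsE => x lt_x.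
by rewrite !extn_row // ks_last kernel_seq0.
Qed.

Lemma mul_skew_companion_last_even (v : 'rV[R]_n.+2) x0 : ~~ odd n ->
  (forall x, (x < n.+2)%N -> extn (v 0) x = if odd x then 0 else x0) ->
  (v *m M) 0 ord_max = x0 * (1 + \sum_(i < n.+1 | ~~ odd i) A i).
Proof.
move=> even_n v_parity; rewrite mul_skew_companion_last v_parity // (negbTE even_n).
rewrite mulrDr mulr1 mulr_sumr [in RHS]big_mkcond /=; congr (_ + _).
apply: eq_bigr => i _.
rewrite v_parity; last exact: ltnW (ltn_ord i).
by case: (odd i); rewrite ?mul0r.
Qed.

End SkewCompanion.

Section SkewCompanionRank.
Variables (F : fieldType) (n : nat) (a : 'I_n.+2 -> F).
Local Notation M := (companion a - (companion a)^T).
Local Notation A := (extn a).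

Lemma skew_companion_kernel_eq0 (u : 'rV[F]_n.+2) : u *m M = 0 ->
  u 0 ord0 = 0 -> u 0 ord_max = 0 -> u = 0.
Proof.
move=> uM0 u_first0 u_last0; apply/rowP => i; rewrite mxE -extn_ord.
rewrite (skew_companion_kernel_seq uM0) // extn_ord0 extn_ord_max.
by rewrite u_first0 u_last0 kernel_seq_t0; case: odd.
Qed.

Lemma skew_companion_rank_ge : (n <= \rank M)%N.
Proof.
have := @mxrank_ge_kernel_coords F n.+2 2 M (fun c => if c == 0 then ord0 else ord_max).
rewrite subSS subSS subn0; apply=> u uM0 coords0.
exact: skew_companion_kernel_eq0 uM0 (coords0 0) (coords0 1).
Qed.

Lemma skew_companion_rank_odd : odd n -> \rank M = n.+1.
Proof.
move=> odd_n; apply/eqP; rewrite eqn_leq; apply/andP; split; last first.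
  have := @mxrank_ge_kernel_coords F n.+2 1 M (fun => ord_max).
  rewrite subn1; apply=> u uM0 /(_ 0) u_last0.
  apply: skew_companion_kernel_eq0 => //.
  have := skew_companion_kernel_seq uM0 (ltnSn n.+1).
  by rewrite extn_ord_max u_last0 kernel_seq_t0 /= odd_n extn_ord0.
pose x0 := 1 + \sum_(i < n.+1 | odd i) A i.
pose w : 'rV[F]_n.+2 := \row_i kernel_seq a 1 x0 i.
have ks_last : kernel_seq a 1 x0 n.+1 = 1.
  by rewrite /kernel_seq /= odd_n /= mul1r addrK.
have w_last : w 0 ord_max = 1 by rewrite mxE.
apply: (@mxrank_lt_of_kernel _ _ _ w).
  by apply/eqP => /rowP/(_ ord_max); rewrite w_last mxE; apply/eqP; apply: oner_neq0.
have rows0 := row_kernel_seq_rows0 ks_last.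
apply: eq_row_last => [k lt_k_n | ]; rewrite [RHS]mxE; first exact: rows0.
by rewrite -[LHS]mulr1 -[X in _ * X]w_last alternating_last_row.
Qed.

Lemma skew_companion_rank_even : ~~ odd n ->
  (\rank M = n.+2 <-> 1 + \sum_(i < n.+1 | ~~ odd i) A i != 0).
Proof.
move=> even_n; set S := \sum_(i < n.+1 | ~~ odd i) A i; split.
  move=> rank_full; apply/eqP => S0.
  pose w : 'rV[F]_n.+2 := \row_i kernel_seq a 0 1 i.
  have w_parity x : (x < n.+2)%N -> extn (w 0) x = if odd x then 0 else 1.
    by move=> lt_x; rewrite extn_row // kernel_seq_t0.
  have: (\rank M < n.+2)%N; last by rewrite rank_full ltnn.
  apply: (@mxrank_lt_of_kernel _ _ _ w).
    apply/eqP => /rowP/(_ ord0); rewrite !mxE kernel_seq0.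
    by apply/eqP; apply: oner_neq0.
  have ks_last : kernel_seq a 0 1 n.+1 = 0 by rewrite kernel_seq_t0 /= even_n.
  apply: eq_row_last => [k lt_k_n | ]; rewrite [RHS]mxE.
    exact: (row_kernel_seq_rows0 ks_last lt_k_n).
  by rewrite (mul_skew_companion_last_even a even_n w_parity) S0 mulr0.
move=> S_neq0; apply/eqP; rewrite eqn_leq rank_leq_row /=.
have := @mxrank_ge_kernel_coords F n.+2 0 M (fun => ord0).
rewrite subn0; apply=> u uM0 _.
have u_ks := skew_companion_kernel_seq uM0.
have u_last0 : u 0 ord_max = 0.
  have := u_ks n.+1 (ltnSn _); rewrite /kernel_seq /= even_n -/S extn_ord_max.
  move/eqP; rewrite -addr_eq0 -[X in X + _]mulr1 -mulrDr mulf_eq0 (negbTE S_neq0) orbF.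
  by move/eqP.
apply: skew_companion_kernel_eq0 => //.
have u_parity x : (x < n.+2)%N -> extn (u 0) x = if odd x then 0 else u 0 ord0.
  by move=> lt_x; rewrite u_ks // extn_ord_max u_last0 kernel_seq_t0 extn_ord0.
have := mul_skew_companion_last_even a even_n u_parity; rewrite uM0 mxE -/S.
by move/esym/eqP; rewrite mulf_eq0 (negbTE S_neq0) orbF => /eqP.
Qed.

End SkewCompanionRank.

Theorem lemma2p7 (F : finFieldType) (j : nat) (a : 'I_j -> F) :
  (2 <= j)%N ->
  let L := companion a in
  [/\ (j - 2 <= \rank (L - L^T)%R)%N,
      odd j -> \rank (L - L^T)%R = j.-1
    & ~~ odd j ->
      (\rank (L - L^T)%R = j <->
       1 + \sum_(i < j | ~~ odd i && (i <= j - 2)%N) a i != 0)].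
Proof.
case: j a => [|[|n]] a // _ L; rewrite subSS subSS subn0 /= negbK.
have -> : \sum_(i < n.+2 | ~~ odd i && (i <= n)%N) a i
          = \sum_(i < n.+1 | ~~ odd i) extn a i.
  rewrite (big_ord_widen_cond n.+2 (fun i => ~~ odd i) (extn a)) //.
  by apply: eq_bigr => i _; rewrite extn_ord.
split.
- exact: skew_companion_rank_ge.
- exact: skew_companion_rank_odd.
- exact: skew_companion_rank_even.
Qed.
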